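(* Let $X$ be a scalar random variable with distribution $\pi$ and upper bound $\ell\in\mathbb{R}$ with $\mathbb{P}_\pi[X\le \ell]=1$. Let $g$ be a closed convex function with $g(1)=0$, let $\beta\ge 0$, and suppose the convex conjugate $g^*$ of $g$ is a real-valued function $g^*:\mathbb{R}\to\mathbb{R}$. Define $L(x,\mu,t) = t\left(\mu + g^*\left(\frac{x}{t}-\mu+\beta\right)\right)$ and suppose $u_b: D\subset\mathbb{R}^2\to\mathbb{R}$ is a function such that $\mathbb{P}_{\pi}[L(X,\mu,t)\le u_b(\mu,t)] = 1$ for all $\mu\in\mathbb{R}$, $t>0$. For $N$ independent samples $x_1,\dots,x_N$ of $X$, let $\zeta^*_N(\mu,t)$ be the solution of $\min_{\zeta\in\mathbb{R}}\zeta$ subject to $\zeta\ge L(x_i,\mu,t)$ for all $i$ (i.e. $\zeta^*_N(\mu,t)=\max_k L(x_k,\mu,t)$). Then for all $\epsilon\in[0,1]$, $\mu\in\mathbb{R}$, $t>0$, \[ \mathbb{P}^N_{\pi}\left[\mathbb{E}_{\pi}[L(X,\mu,t)] \le \zeta^*_N(\mu,t)(1-\epsilon) + u_b(\mu,t)\epsilon\right] \ge 1-(1-\epsilon)^N. \]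
   Context: $\mathbb{P}^N_{\pi}$ denotes the $N$-fold product probability measure governing the i.i.d. sample $(x_1,\dots,x_N)$. The convex conjugate is $g^*(y)=\sup_x (xy - g(x))$. *)

From HB Require Import structures.
From mathcomp Require Import all_boot all_order all_algebra.
From mathcomp Require Import all_classical all_reals all_analysis.
Set Implicit Arguments. Unset Strict Implicit. Unset Printing Implicit Defensive.
Import Order.TTheory GRing.Theory Num.Theory.
Import numFieldNormedType.Exports.
Local Open Scope classical_set_scope.
Local Open Scope ring_scope.

Definition epigraph (R : realType) (g : R -> \bar R) : set (R * R) :=
  [set p | (g p.1 <= p.2%:E)%E].

Definition closed_convex_fun (R : realType) (g : R -> \bar R) : Prop :=
  closed (epigraph g : set (R * R)%type) /\
  (forall p q : R * R, epigraph g p -> epigraph g q ->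
     forall lam : R, 0 <= lam <= 1 ->
       epigraph g (lam * p.1 + (1 - lam) * q.1, lam * p.2 + (1 - lam) * q.2)).

Definition is_conjugate (R : realType) (g : R -> \bar R) (gs : R -> R) : Prop :=
  forall y : R, ereal_sup [set ((x * y)%:E - g x)%E | x in [set: R]] = (gs y)%:E.

Definition Lloss (R : realType) (gs : R -> R) (beta x mu t : R) : R :=
  t * (mu + gs (x / t - mu + beta)).

Definition has_distribution (R : realType) (d : measure_display)
  (Omega : measurableType d) (P : probability Omega R)
  (pi : probability R R) (X : Omega -> R) : Prop :=
  measurable_fun setT X /\
  forall B : set R, measurable B -> P (X @^-1` B) = pi B.

(* mutual independence of the finite family x_0, ..., x_{N-1}
   (product rule for every choice of Borel sets; taking B_j = setT
   gives the product rule for every subfamily) *)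
Definition mutually_independent (R : realType) (d : measure_display)
  (Omega : measurableType d) (P : probability Omega R) (N : nat)
  (x : 'I_N -> Omega -> R) : Prop :=
  forall B : 'I_N -> set R, (forall j, measurable (B j)) ->
    P (\bigcap_(j in [set: 'I_N]) (x j @^-1` B j)) =
    (\prod_(j < N) P (x j @^-1` B j))%E.

(* zeta*_N(mu,t) = min { zeta | zeta >= L(x_i,mu,t) for all i } = max_k L(x_k,mu,t)
   (= -oo when N = 0) *)
Definition zeta_star (R : realType) (N : nat) (gs : R -> R) (beta : R)
  (xs : 'I_N -> R) (mu t : R) : \bar R :=
  (\big[Order.max/-oo]_(k < N) (Lloss gs beta (xs k) mu t)%:E)%E.

From HB Require Import structures.
From mathcomp Require Import all_boot all_order all_algebra.
From mathcomp Require Import all_classical all_reals all_analysis.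
From mathcomp Require Import measurable_realfun.
From mathcomp.algebra_tactics Require Import ring lra.
Import Order.TTheory GRing.Theory Num.Theory.
Import numFieldNormedType.Exports.
Local Open Scope classical_set_scope.
Local Open Scope ring_scope.

(* Write U := ub mu t. Since L(X) <= U almost surely, comparing L with
   U - (U - c') 1_{L < c'} for c' < c (a Markov-type argument applied to
   U - L(X)) and letting c' tend to c shows that the level c defined by
   c (1 - eps) + U eps = E[L(X)] satisfies pi[L(X) < c] <= 1 - eps.
   The claimed bound on E[L(X)] is equivalent to c <= zeta*_N = max_k L(x_k),
   so it fails only if L(x_k) < c for every k, an event of probability
   pi[L(X) < c]^N <= (1 - eps)^N by independence. Measurability of L in x
   comes from the lower semicontinuity of g^*, a supremum of affine
   functions. *)

Lemma conjugate_lower_semicontinuous {R : realType} {g : R -> \bar R}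
    {gs : R -> R} :
  is_conjugate g gs -> lower_semicontinuous (EFin \o gs).
Proof.
move=> hconj y0 a /=; rewrite -hconj => /ereal_sup_gt[_ [x0 _ <-]].
have affine_le_gs y : ((x0 * y)%:E - g x0 <= (gs y)%:E)%E.
  by rewrite -hconj; apply: ereal_sup_ubound; exists x0.
move: affine_le_gs; case: (g x0) => [r| |] affine_le_gs ha //.
- have cont_affine : continuous (fun y : R => x0 * y - r).
    move=> y; apply: cvgB; last exact: cvg_cst.
    by apply: cvgM; [exact: cvg_cst | exact: cvg_id].
  exists ((fun y : R => x0 * y - r) @^-1` [set z | a < z]).
    apply: open_nbhs_nbhs; split; last by rewrite /= -lte_fin.
    by apply: open_comp; [move=> ? _; exact: cont_affine | exact: open_gt].
  by move=> y /= hy; apply: lt_le_trans (affine_le_gs y); rewrite lte_fin.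
- exists setT; first exact: filterT.
  by move=> y _; apply: lt_le_trans (affine_le_gs y); exact: ltry.
Qed.

Lemma measurable_conjugate {R : realType} {g : R -> \bar R} {gs : R -> R} :
  is_conjugate g gs -> measurable_fun setT gs.
Proof.
move=> /conjugate_lower_semicontinuous.
by move=> /lower_semicontinuous_measurable/measurable_EFinP.
Qed.

Lemma measurable_Lloss {R : realType} {gs : R -> R} (beta mu t : R) :
  measurable_fun setT gs -> measurable_fun setT (fun y => Lloss gs beta y mu t).
Proof.
move=> mgs; apply: measurable_funM => //; apply: measurable_funD => //.
apply: measurableT_comp mgs _; apply: measurable_funD => //.
by apply: measurable_funB => //; exact: measurable_funM.
Qed.

Lemma measurable_sublevel_lt {d} {T : measurableType d} {R : realType}
    (f : T -> R) (c : R) :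
  measurable_fun setT f -> measurable [set y | f y < c].
Proof.
by move=> mf; rewrite -preimage_itvNyo -[_ @^-1` _]setTI; exact: mf.
Qed.

Lemma ae_le_integral {d} {T : measurableType d} {R : realType}
    (mu : {measure set T -> \bar R}) (D : set T) (f h : T -> \bar R) :
  measurable D -> measurable_fun D f -> measurable_fun D h ->
  {ae mu, forall y, D y -> (f y <= h y)%E} ->
  (\int[mu]_(y in D) f y <= \int[mu]_(y in D) h y)%E.
Proof.
move=> mD mf mh fh; rewrite integralE [leRHS]integralE; apply: leeB.
- apply: ae_ge0_le_integral => //; do ?[by move=> y _; exact: funepos_ge0];
    do ?exact: measurable_funepos.
  by apply: filterS fh => y fhy Dy; rewrite !funeposE le_max2 ?fhy.
- apply: ae_ge0_le_integral => //; do ?[by move=> y _; exact: funeneg_ge0];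
    do ?exact: measurable_funeneg.
  by apply: filterS fh => y fhy Dy; rewrite !funenegE le_max2 ?leeN2 ?fhy.
Qed.

Lemma measure_lt_le_from_below {d} {T : measurableType d} {R : realType}
    (mu : {measure set T -> \bar R}) (f : T -> R) (c : R) (b : \bar R) :
  measurable_fun setT f ->
  (forall n : nat, (mu [set y | (f y < c - n.+1%:R^-1)%R] <= b)%E) ->
  (mu [set y | (f y < c)%R] <= b)%E.
Proof.
move=> mf Fb; set F := fun n : nat => [set y | f y < c - n.+1%:R^-1].
have inv_gt0 n : 0 < n.+1%:R^-1 :> R by rewrite invr_gt0 ltr0Sn.
have UF : \bigcup_n F n = [set y | f y < c].
  apply/seteqP; split => y /=.
  - move=> [n _]; rewrite /F /=; move: (inv_gt0 n).
    by move: (n.+1%:R^-1) => e; lra.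
  - move=> /ltr_add_invr[n hn]; exists n => //; rewrite /F /=.
    by move: hn; move: (n.+1%:R^-1) => e; lra.
have ndF : nondecreasing_seq F.
  move=> n m nm; apply/subsetPset => y; rewrite /F /=.
  have : m.+1%:R^-1 <= n.+1%:R^-1 :> R.
    by rewrite lef_pV2 ?posrE ?ltr0Sn // ler_nat ltnS.
  by move: (m.+1%:R^-1) (n.+1%:R^-1) => e e'; lra.
have mF n : measurable (F n) by exact: measurable_sublevel_lt.
have mUF : measurable (\bigcup_n F n).
  by rewrite UF; exact: measurable_sublevel_lt.
have muF := nondecreasing_cvg_mu (mu := mu) mF mUF ndF.
rewrite -UF -(cvg_lim _ muF) //; apply: lime_le; last exact: nearW.
by apply/cvg_ex; exists (mu (\bigcup_n F n)).
Qed.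

Section integral_ae_upper_bound.
Context {d} {T : measurableType d} {R : realType} {mu : probability T R}.

Lemma integral_cst_sub_indic (U a : R) (A : set T) : measurable A ->
  (\int[mu]_(y in setT) (U - a * \1_A y)%:E = U%:E - a%:E * mu A)%E.
Proof.
move=> mA; have iA : mu.-integrable setT (EFin \o (fun y => a * \1_A y)).
  by apply: eq_integrable (integrableZl measurableT a (integrable_indic mu mA)).
rewrite (eq_integral (fun y => (cst U y)%:E - (a * \1_A y)%:E)%E); last first.
  by move=> y _; rewrite EFinB.
rewrite integralB_EFin //; last exact: finite_measure_integrable_cst.
rewrite -[X in (X - _)%E]/(\int[mu]_(y in setT) cst U%:E y)%E.
rewrite integral_cst //; congr (_ - _)%E.
  by rewrite -[RHS]mule1; congr (_ * _)%E; exact: probability_setT.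
under eq_integral do rewrite EFinM.
by rewrite integralZl ?integral_indic ?setIT //; exact: integrable_indic.
Qed.

Context {f : T -> R} {U : R}.
Hypotheses (mf : measurable_fun setT f) (fU : {ae mu, forall y, f y <= U}).

Lemma integral_le_sub_measure_lt (a : R) :
  (\int[mu]_(y in setT) (f y)%:E
     <= U%:E - a%:E * mu [set y | (f y < U - a)%R])%E.
Proof.
have mA : measurable [set y | f y < U - a] by exact: measurable_sublevel_lt.
rewrite -integral_cst_sub_indic //; apply: ae_le_integral => //.
- exact/measurable_EFinP.
- apply/measurable_EFinP; apply: measurable_funB => //.
  by apply: measurable_funM => //; exact: measurable_indic.
- apply: filterS fU => y fyU _; rewrite lee_fin indicE.
  case: (boolP (y \in _)) => [/set_mem /= /ltW|_].
  - by rewrite mulr1.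
  - by rewrite mulr0 subr0.
Qed.

Lemma integral_le_ae_ub : (\int[mu]_(y in setT) (f y)%:E <= U%:E)%E.
Proof. by have := integral_le_sub_measure_lt 0; rewrite mul0e sube0. Qed.

Lemma measure_lt_le_of_integral {r c p : R} :
  (\int[mu]_(y in setT) (f y)%:E)%E = r%:E -> 0 < p ->
  U - r <= p * (U - c) -> (mu [set y | (f y < c)%R] <= p%:E)%E.
Proof.
move=> fr p0 rc; have := integral_le_ae_ub; rewrite fr lee_fin => rU.
have cU : c <= U by rewrite -subr_ge0 -(pmulr_rge0 _ p0); lra.
apply: measure_lt_le_from_below => // n.
have : 0 < n.+1%:R^-1 :> R by rewrite invr_gt0 ltr0Sn.
move: (n.+1%:R^-1) => e e0; have a0 : 0 < U - c + e by lra.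
have := integral_le_sub_measure_lt (U - c + e).
rewrite fr (_ : U - (U - c + e) = c - e); last by ring.
have fin_tail : mu [set y | f y < c - e] \is a fin_num
  by apply: fin_num_measure; exact: measurable_sublevel_lt.
rewrite -(fineK fin_tail) -EFinM -EFinB lee_fin => r_le.
suff : fine (mu [set y | f y < c - e]) <= p by rewrite -lee_fin fineK.
rewrite -(ler_pM2l a0).
have : p * (U - c) <= p * (U - c + e) by rewrite ler_pM2l //; lra.
by move: r_le; move: (fine _) => q; lra.
Qed.

End integral_ae_upper_bound.

Lemma lee_mul_add_pos {R : realFieldType} (a b r : R) (M : \bar R) : 0 < a ->
  (r%:E <= M * a%:E + b%:E)%E = (((r - b) / a)%:E <= M)%E.
Proof.
move=> a0; case: M => [s| |] /=.
- by rewrite -EFinM -EFinD !lee_fin ler_pdivrMr // lerBlDr.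
- by rewrite gt0_mulye ?lte_fin // addye // !leey.
- by rewrite gt0_mulNye ?lte_fin // addNye !leeNy_eq.
Qed.

Lemma zeta_star_geP {R : realType} {N : nat} (gs : R -> R) (beta : R)
    (xs : 'I_N -> R) (mu t c : R) :
  reflect (exists k, c <= Lloss gs beta (xs k) mu t)
    (c%:E <= zeta_star gs beta xs mu t)%E.
Proof.
rewrite /zeta_star; apply: (iffP (bigmax_geP _ _ _ _)) => [[|[k _]]|[k ck]].
- by rewrite leeNy_eq.
- by rewrite lee_fin; exists k.
- by right; exists k; rewrite ?lee_fin.
Qed.

Lemma measure_some_notin_ge {R : realType} {d} {Omega : measurableType d}
    {P : probability Omega R} {mu : probability R R} {N : nat}
    {X : 'I_N -> Omega -> R} {B : set R} {p : R} :
  (forall k, has_distribution P mu (X k)) -> mutually_independent P X ->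
  measurable B -> (mu B <= p%:E)%E ->
  ((1 - p ^+ N)%:E <= P (~` \bigcap_(j in [set: 'I_N]) X j @^-1` B))%E.
Proof.
move=> hdist hind mB muBp.
have mXB j : measurable (X j @^-1` B).
  by rewrite -[_ @^-1` _]setTI; exact: (hdist j).1.
rewrite probability_setC; last first.
  by apply: fin_bigcap_measurable => //; exact: finite_finset.
rewrite (hind (fun=> B)) //; under eq_bigr do rewrite (hdist _).2 //.
have fin_muB : mu B \is a fin_num by exact: fin_num_measure.
move: muBp; rewrite -(fineK fin_muB) prodEFin -EFinB !lee_fin.
rewrite prodr_const card_ord.
have muB_ge0 : 0 <= fine (mu B) by rewrite fine_ge0 ?measure_ge0.
move=> muBp; rewrite lerD2l lerN2 lerXn2r ?nnegrE //.
exact: le_trans muBp.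
Qed.

Theorem lemma1 (R : realType) (pi : probability R R) (ell : R)
  (g : R -> \bar R) (gs : R -> R) (beta : R) (ub : R -> R -> R)
  (d : measure_display) (Omega : measurableType d) (P : probability Omega R)
  (N : nat) (x : 'I_N -> Omega -> R) :
  pi [set y | y <= ell] = 1%E ->
  closed_convex_fun g -> g 1 = 0%E -> 0 <= beta ->
  is_conjugate g gs ->
  (forall mu t : R, 0 < t ->
     pi [set y | Lloss gs beta y mu t <= ub mu t] = 1%E) ->
  (forall k, has_distribution P pi (x k)) ->
  mutually_independent P x ->
  forall eps mu t : R, 0 <= eps <= 1 -> 0 < t ->
  (P [set w | (\int[pi]_(y in setT) (Lloss gs beta y mu t)%:E
                <= zeta_star gs beta (fun k => x k w) mu t * (1 - eps)%:E
                   + (ub mu t * eps)%:E)%E]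
   >= (1 - (1 - eps) ^+ N)%:E)%E.
Proof.
move=> _ _ _ _ hconj hub hdist hind eps mu t /andP[eps_ge0 eps_le1] t_gt0.
have mL := measurable_Lloss beta mu t (measurable_conjugate hconj).
have L_le_ub : {ae pi, forall y, Lloss gs beta y mu t <= ub mu t}.
  have mle : measurable [set y | Lloss gs beta y mu t <= ub mu t].
    by rewrite -preimage_itvNyc -[_ @^-1` _]setTI; exact: mL.
  exists (~` [set y | Lloss gs beta y mu t <= ub mu t]); split => //=.
    exact: measurableC.
  by rewrite probability_setC // hub // subee.
have sure_event (S : set Omega) :
    S = setT -> ((1 - (1 - eps) ^+ N)%:E <= P S)%E.
  by move=> ->; rewrite probability_setT lee_fin gerBl exprn_ge0 // subr_ge0.
have [eps1|eps_neq1] := eqVneq eps 1.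
  apply: sure_event; apply/seteqP; split => // w _ /=.
  by rewrite eps1 subrr mule0 add0e mulr1; exact: integral_le_ae_ub.
have one_sub_eps_gt0 : 0 < 1 - eps by rewrite subr_gt0 lt_neqAle eps_neq1.
case Er : (\int[pi]_(y in setT) (Lloss gs beta y mu t)%:E)%E => [r| |].
- set c := (r - ub mu t * eps) / (1 - eps).
  have tail_le : (pi [set y | (Lloss gs beta y mu t < c)%R] <= (1 - eps)%:E)%E.
    apply: (measure_lt_le_of_integral mL L_le_ub Er one_sub_eps_gt0).
    by rewrite mulrBr /c mulrCA divff ?mulr1 ?gt_eqF //; lra.
  rewrite (_ : [set w | _] = ~` \bigcap_(j in [set: 'I_N])
      x j @^-1` [set y | Lloss gs beta y mu t < c]).
    by apply: measure_some_notin_ge => //; exact: measurable_sublevel_lt.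
  apply/seteqP; split => w /=; rewrite lee_mul_add_pos // -/c.
  + by case/zeta_star_geP => k ck /(_ k I); rewrite /= ltNge ck.
  + move=> not_all_lt; apply/zeta_star_geP; apply: contra_notP not_all_lt.
    move=> no_ge j _ /=; rewrite ltNge; apply/negP => cj.
    by apply: no_ge; exists j.
- by have := integral_le_ae_ub mL L_le_ub; rewrite Er leye_eq.
- by apply: sure_event; apply/seteqP; split => // w _; exact: leNye.
Qed.
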